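(* Let $\mathcal V$ be an algebra of differentiable functions, $A=\bigoplus_{i\in I}\mathbb F[\partial]u_i$ with zero $\lambda$-bracket acting on $\mathcal V$ by ${u_i}_\lambda f=\sum_n\lambda^n\frac{\partial f}{\partial u_i^{(n)}}$. The map $\Phi_1:\Pi\tilde\Gamma_1\to\mathfrak g$ sending $\xi=\sum_{i\in I}u_i\otimes P_i(x)$, $P_i(x)=\sum_{n}\frac1{n!}P_{i,n}x^n$, to $\Phi_1(\xi)=\sum_{i\in I,n\in\mathbb Z_+}P_{i,n}\frac{\partial}{\partial u_i^{(n)}}$ is a Lie algebra isomorphism, and $\Phi_1(\Pi\Gamma_1)=\mathfrak g^\partial$, so it induces a Lie algebra isomorphism $\Pi\Gamma_1\simeq\mathfrak g^\partial$.
   Context: $\mathbb F$ field of characteristic 0, $I=\{1,\dots,\ell\}$. Algebra of differentiable functions $\mathcal V$: unital commutative associative with derivation $\partial$ and commuting derivations $\frac{\partial}{\partial u_i^{(n)}}$, finitely many nonzero on each element, with $[\frac{\partial}{\partial u_i^{(n)}},\partial]=\frac{\partial}{\partial u_i^{(n-1)}}$. $\mathfrak g$: Lie algebra of vector fields $\sum_{i,n}P_{i,n}\frac{\partial}{\partial u_i^{(n)}}$ ($P_{i,n}\in\mathcal V$, arbitrary families), with commutator bracket; $\mathfrak g^\partial$: those commuting with $\partial$. Every element of $\tilde\Gamma_1$ has a unique representative $\sum_iu_i\otimes P_i(x)$ with $P_i(x)\in\mathcal V[[x]]$, where $\tilde\Gamma_1=(A\otimes\mathcal V[[x]])/(\partial\otimes1+1\otimes\partial_x)(A\otimes\mathcal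 V[[x]])$; Lie bracket on $\Pi\tilde\Gamma_1$ (as an even space): $[u_i\otimes P(x),u_j\otimes Q(x)]=-u_i\otimes\sum_nQ_n\frac{\partial P(x)}{\partial u_j^{(n)}}+u_j\otimes\sum_mP_m\frac{\partial Q(x)}{\partial u_i^{(m)}}$ for $P(x)=\sum_m\frac1{m!}P_mx^m$, $Q(x)=\sum_n\frac1{n!}Q_nx^n$ (derivatives applied coefficientwise). $\partial$ acts on $\tilde\Gamma_1$ by $u_i\otimes P(x)\mapsto u_i\otimes(\partial-\partial_x)P(x)$ and $\Gamma_1=\ker\partial$. *)

From Stdlib Require Import ClassicalEpsilon.
From HB Require Import structures.
From mathcomp Require Import all_boot all_order all_algebra.
Set Implicit Arguments. Unset Strict Implicit. Unset Printing Implicit Defensive.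
Import GRing.Theory.
Local Open Scope ring_scope.

Section ADF.
Variables (F : fieldType) (V : comAlgType F) (l : nat).

Definition is_derivation (D : V -> V) : Prop :=
  (forall (a : F) (x y : V), D (a *: x + y) = a *: D x + D y) /\
  (forall x y : V, D (x * y) = D x * y + x * D y).

(* An algebra of differentiable functions in the variables u_i, i in I = 'I_l:
   dx is the derivation \partial, dd i n is d/du_i^(n), u i n is u_i^(n). *)
Definition is_adf (dx : V -> V) (dd : 'I_l -> nat -> V -> V)
    (u : 'I_l -> nat -> V) : Prop :=
  is_derivation dx /\
  [/\ 
      (forall i n, is_derivation (dd i n)),
      (forall i j m n f, dd i m (dd j n f) = dd j n (dd i m f)),
      (forall f, exists N, forall i n, (N <= n)%N -> dd i n f = 0),
      (forall i n f, dd i n (dx f) - dx (dd i n f)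
                     = if n is n'.+1 then dd i n' f else 0) &
      ((forall i n, dx (u i n) = u i n.+1) /\
      (forall i j m n, dd j m (u i n) = if (i == j) && (m == n) then 1 else 0))].

Definition dbound (dd : 'I_l -> nat -> V -> V) (f : V) : nat :=
  epsilon (inhabits 0%N) (fun N => forall i n, (N <= n)%N -> dd i n f = 0).

(* vector fields sum_{i,n} X i n d/du_i^(n) : coefficient families *)
Definition vfield := 'I_l -> nat -> V.

Definition vf_act (dd : 'I_l -> nat -> V -> V) (X : vfield) (f : V) : V :=
  \sum_(i < l) \sum_(n < dbound dd f) X i n * dd i n f.

Definition vf_br dd (X Y : vfield) : vfield :=
  fun i n => vf_act dd X (Y i n) - vf_act dd Y (X i n).

Definition gpartial (dx : V -> V) dd (X : vfield) : Prop :=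
  forall f, dx (vf_act dd X f) = vf_act dd X (dx f).

(* Pi tGamma_1: xi = sum_i u_i (x) P_i(x), represented by the power-series
   coefficients: xi i r = coefficient of x^r in P_i(x). *)
Definition tGamma := 'I_l -> nat -> V.

(* P_{i,n} = n! * (coefficient of x^n), so P_i(x) = sum_n P_{i,n} x^n / n! *)
Definition Pcoef (xi : tGamma) : 'I_l -> nat -> V :=
  fun i n => (n`!)%:R * xi i n.

(* Lie bracket on Pi tGamma_1 (bilinear extension of the given formula):
   [xi, eta]_k(x) = - sum_{j,n} Q_{j,n} dP_k(x)/du_j^(n)
                    + sum_{i,m} P_{i,m} dQ_k(x)/du_i^(m), coefficientwise. *)
Definition gbr dd (xi eta : tGamma) : tGamma :=
  fun k r => - vf_act dd (Pcoef eta) (xi k r) + vf_act dd (Pcoef xi) (eta k r).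

(* \partial on tGamma_1 : u (x) P(x) |-> u (x) (\partial - \partial_x) P(x) *)
Definition gdx (dx : V -> V) (xi : tGamma) : tGamma :=
  fun k r => dx (xi k r) - (r.+1)%:R * xi k r.+1.

Definition Gamma1 dx (xi : tGamma) : Prop := forall k r, gdx dx xi k r = 0.

Definition Phi1 (xi : tGamma) : vfield := Pcoef xi.

End ADF.

(* Phi_1 only rescales the n-th Taylor coefficient of P_i(x) by n!, which is
   invertible in characteristic 0, so it is a linear bijection.  Both brackets
   are built from the action of vector fields on the coefficients, and that
   action commutes with the rescaling, so Phi_1 is a Lie algebra morphism.
   Finally, a vector field X commutes with \partial iff it does so on every
   coordinate u_i^(n), i.e. iff \partial X_{i,n} = X_{i,n+1}; on the Taylor
   coefficients this is exactly (\partial - \partial_x) P_i(x) = 0. *)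

From HB Require Import structures.
From mathcomp Require Import all_boot all_order all_algebra.
From Stdlib Require Import ClassicalEpsilon FunctionalExtensionality.
Import GRing.Theory.
Local Open Scope ring_scope.
Set Implicit Arguments. Unset Strict Implicit.

Section Derivation.
Variables (F : fieldType) (V : comAlgType F) (D : V -> V).
Hypothesis derD : is_derivation D.

Lemma derivationD x y : D (x + y) = D x + D y.
Proof. by case: derD => lin _; have := lin 1 x y; rewrite !scale1r. Qed.

Lemma derivation0 : D 0 = 0.
Proof. by apply: (addIr (D 0)); rewrite -derivationD !add0r. Qed.

Lemma derivationM x y : D (x * y) = D x * y + x * D y.
Proof. by case: derD. Qed.

Lemma derivationMn x k : D (x *+ k) = D x *+ k.
Proof.
by elim: k => [|k IHk]; rewrite ?mulr0n ?derivation0 // !mulrS derivationD IHk.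
Qed.

Lemma derivation_sum (I : Type) (r : seq I) (P : pred I) (g : I -> V) :
  D (\sum_(i <- r | P i) g i) = \sum_(i <- r | P i) D (g i).
Proof. exact: (big_morph D derivationD derivation0). Qed.

End Derivation.

Lemma char0_fact_neq0 (F : fieldType) (n : nat) :
  [pchar F] =i pred0 -> (n`!%:R : F) != 0.
Proof. by move=> /pcharf0P char0; rewrite char0 -lt0n fact_gt0. Qed.

Section VectorFieldAction.
Variables (F : fieldType) (V : comAlgType F) (l : nat).
Variable dd : 'I_l -> nat -> V -> V.

Definition vanishes_from (f : V) (N : nat) : Prop :=
  forall i n, (N <= n)%N -> dd i n f = 0.

Hypothesis dd_finite : forall f, exists N, vanishes_from f N.

Definition vf_act_upto (X : vfield V l) (f : V) (N : nat) : V :=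
  \sum_(i < l) \sum_(0 <= n < N) X i n * dd i n f.

Lemma vf_act_upto_widen X f N M :
  vanishes_from f N -> (N <= M)%N -> vf_act_upto X f M = vf_act_upto X f N.
Proof.
move=> fN leNM; apply: eq_bigr => i _.
rewrite (@big_cat_nat _ _ _ N 0 M _ _ (leq0n N) leNM) /=.
rewrite [S in _ + S]big1_seq ?addr0 // => n /andP[_].
by rewrite mem_index_iota => /andP[leNn _]; rewrite fN // mulr0.
Qed.

Lemma vf_act_truncate X f N :
  vanishes_from f N -> vf_act dd X f = vf_act_upto X f N.
Proof.
move=> fN; have fB : vanishes_from f (dbound dd f).
  exact: epsilon_spec (dd_finite f).
have -> : vf_act dd X f = vf_act_upto X f (dbound dd f).
  by apply: eq_bigr => i _; rewrite big_mkord.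
rewrite -(vf_act_upto_widen X fB (leq_maxl _ N)).
exact: vf_act_upto_widen fN (leq_maxr _ N).
Qed.

Hypothesis dd_derivation : forall i n, is_derivation (dd i n).

Lemma vf_actMn X f k : vf_act dd X (f *+ k) = vf_act dd X f *+ k.
Proof.
have [N fN] := dd_finite f.
have fkN : vanishes_from (f *+ k) N.
  by move=> i n leNn; rewrite derivationMn // fN // mul0rn.
rewrite (vf_act_truncate X fN) (vf_act_truncate X fkN) -sumrMnl.
apply: eq_bigr => i _; rewrite -sumrMnl; apply: eq_bigr => n _.
by rewrite derivationMn // mulrnAr.
Qed.

Lemma Phi1_gbr (xi eta : tGamma V l) :
  Phi1 (gbr dd xi eta) = vf_br dd (Phi1 xi) (Phi1 eta).
Proof.
do 2!apply: functional_extensionality => ?.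
rewrite /Phi1 /vf_br /gbr /Pcoef !mulr_natl !vf_actMn.
by rewrite mulrnDl mulNrn addrC.
Qed.

Variable u : 'I_l -> nat -> V.
Hypothesis dd_u :
  forall i j m n, dd j m (u i n) = if (i == j) && (m == n) then 1 else 0.

Lemma vf_act_coord X j m : vf_act dd X (u j m) = X j m.
Proof.
have umN : vanishes_from (u j m) m.+1.
  by move=> i n ltmn; rewrite dd_u (gtn_eqF ltmn) andbF.
rewrite (vf_act_truncate X umN) /vf_act_upto (bigD1 j) //= [S in _ + S]big1.
  rewrite addr0 big_nat_recr //= dd_u !eqxx mulr1 big1_seq ?add0r // => n.
  by rewrite mem_index_iota dd_u eqxx => /ltn_eqF ->; rewrite mulr0.
by move=> i neij; apply: big1 => n _; rewrite dd_u eq_sym (negbTE neij) mulr0.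
Qed.

End VectorFieldAction.

Section CommutingWithPartial.
Variables (F : fieldType) (V : comAlgType F) (l : nat).
Variables (dx : V -> V) (dd : 'I_l -> nat -> V -> V) (u : 'I_l -> nat -> V).
Hypothesis adf : is_adf dx dd u.

Lemma dd_dx i n f :
  dd i n (dx f) = dx (dd i n f) + (if n is n'.+1 then dd i n' f else 0).
Proof. by case: adf => _ [_ _ _ comm _]; rewrite -comm addrC subrK. Qed.

(* Necessity: test on the coordinates u_i^(n).  Sufficiency: expanding both
   sides with Leibniz and [dd_dx], the shifted terms of [dd_dx] telescope
   against the terms dx (X i n) * dd i n f. *)
Lemma gpartialP (X : vfield V l) :
  gpartial dx dd X <-> forall i n, dx (X i n) = X i n.+1.
Proof.
case: adf => dxD [ddD _ dd_fin _ [dx_u dd_u]]; split.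
  by move=> Xdx i n; have := Xdx (u i n); rewrite dx_u !(vf_act_coord dd_fin dd_u).
move=> Xshift f; have [N fN] := dd_fin f.
have fN1 : vanishes_from dd f N.+1 by move=> i n /ltnW; apply: fN.
have dxfN1 : vanishes_from dd (dx f) N.+1.
  move=> i [//|n] ltNn; rewrite dd_dx fN1 // derivation0 // add0r.
  exact: fN.
rewrite (vf_act_truncate dd_fin X fN1) (vf_act_truncate dd_fin X dxfN1).
rewrite /vf_act_upto derivation_sum //; apply: eq_bigr => i _.
rewrite derivation_sum //.
under eq_bigr do rewrite derivationM //.
under [RHS]eq_bigr do rewrite dd_dx mulrDr.
rewrite !big_split /= addrC; congr (_ + _).
rewrite big_nat_recr //= fN // mulr0 addr0 big_nat_recl //= mulr0 add0r.
by apply: eq_bigr => n _; rewrite Xshift.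
Qed.

End CommutingWithPartial.

Section TaylorCoefficients.
Variables (F : fieldType) (V : comAlgType F) (l : nat).
Hypothesis char0 : [pchar F] =i pred0.

Lemma Pcoef_scale (xi : tGamma V l) i n : Pcoef xi i n = (n`!%:R : F) *: xi i n.
Proof. by rewrite /Pcoef mulr_natl scaler_nat. Qed.

Definition Phi1_inv (X : vfield V l) : tGamma V l :=
  fun i n => (n`!%:R : F)^-1 *: X i n.

Lemma Phi1_scale_add (a : F) (xi eta : tGamma V l) i n :
  Phi1 (fun k r => a *: xi k r + eta k r) i n = a *: Phi1 xi i n + Phi1 eta i n.
Proof. by rewrite /Phi1 !Pcoef_scale scalerDr scalerA mulrC -scalerA. Qed.

Lemma Phi1K : cancel (@Phi1 F V l) Phi1_inv.
Proof.
move=> xi; do 2!apply: functional_extensionality => ?.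
by rewrite /Phi1_inv /Phi1 Pcoef_scale scalerA mulVf ?scale1r ?char0_fact_neq0.
Qed.

Lemma Phi1_invK : cancel Phi1_inv (@Phi1 F V l).
Proof.
move=> X; do 2!apply: functional_extensionality => ?.
by rewrite /Phi1 Pcoef_scale /Phi1_inv scalerA mulfV ?scale1r ?char0_fact_neq0.
Qed.

Lemma Gamma1P (dx : V -> V) (xi : tGamma V l) :
  is_derivation dx ->
  Gamma1 dx xi <-> forall i n, dx (Pcoef xi i n) = Pcoef xi i n.+1.
Proof.
move=> dxD.
have shift i n : dx (Pcoef xi i n) - Pcoef xi i n.+1 = gdx dx xi i n *+ n`!.
  by rewrite /Pcoef /gdx !mulr_natl derivationMn // factS mulrnA mulrnBl.
split=> [xi0 i n | xishift i n].
  by apply/eqP; rewrite -subr_eq0 shift xi0 mul0rn.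
apply: (scalerI (char0_fact_neq0 n char0)).
by rewrite scaler0 scaler_nat -shift xishift subrr.
Qed.

End TaylorCoefficients.

Theorem proposition4p5 (F : fieldType) (V : comAlgType F) (l : nat)
    (dx : V -> V) (dd : 'I_l -> nat -> V -> V) (u : 'I_l -> nat -> V) :
  [pchar F] =i pred0 ->
  is_adf dx dd u ->
  [/\ (forall (a : F) (xi eta : tGamma V l) i n,
         Phi1 (fun k r => a *: xi k r + eta k r) i n
         = a *: Phi1 xi i n + Phi1 eta i n),
      bijective (@Phi1 F V l),
      (forall xi eta : tGamma V l,
         Phi1 (gbr dd xi eta) = vf_br dd (Phi1 xi) (Phi1 eta)),
      (forall xi : tGamma V l, Gamma1 dx xi <-> gpartial dx dd (Phi1 xi)) &
      (forall X : vfield V l, gpartial dx dd X ->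
         exists xi : tGamma V l, Gamma1 dx xi /\ Phi1 xi = X)].
Proof.
move=> char0 adf; have [dxD [ddD _ dd_fin _ _]] := adf.
have Gamma1_gpartial xi : Gamma1 dx xi <-> gpartial dx dd (Phi1 xi).
  by rewrite (Gamma1P char0 xi dxD) (gpartialP adf).
split.
- exact: Phi1_scale_add.
- exact: Bijective (Phi1K char0) (Phi1_invK char0).
- exact: Phi1_gbr dd_fin ddD.
- exact: Gamma1_gpartial.
- by move=> X XdX; exists (Phi1_inv X); rewrite Gamma1_gpartial Phi1_invK.
Qed.
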